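(* Let $X$ be a set and let $\mathcal P$ be a ring of subsets of $X$ (closed under finite intersections and finite unions) such that $\mathcal P\subseteq\mathcal P_{seq}$. Then the $\mathcal Q_{\mathcal P}$-topology on $X/\mathcal P$ is completely regular.
   Context: $[x]_{\mathcal P}=\{y\in X:\forall V\in\mathcal P\ (x\in V\iff y\in V)\}$, $X/\mathcal P=\{[x]_{\mathcal P}:x\in X\}$, $q(x)=[x]_{\mathcal P}$, and the $\mathcal Q_{\mathcal P}$-topology is the coarsest topology on $X/\mathcal P$ containing all sets $q[V]=\{[x]_{\mathcal P}:x\in V\}$, $V\in\mathcal P$. $\mathcal P_{seq}$ is the family of all sets $W$ for which there exist sequences $\{U_n\}_{n\in\omega}\subseteq\mathcal P$ and $\{V_n\}_{n\in\omega}\subseteq\mathcal P$ with $U_k\subseteq X\setminus V_k\subseteq U_{k+1}$ for every $k$ and $\bigcup_nU_n=W$. Completely regular spaces are assumed $T_1$. *)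

From Stdlib Require Import Reals.
From Stdlib Require Export Rtopology.
Open Scope R_scope.

Section Defs.
Context {X : Type}.

Definition ring_of_sets (P : (X -> Prop) -> Prop) : Prop :=
  forall A B, P A -> P B ->
    P (fun x => A x /\ B x) /\ P (fun x => A x \/ B x).

Definition P_seq (P : (X -> Prop) -> Prop) (W : X -> Prop) : Prop :=
  exists (U V : nat -> X -> Prop),
    (forall n, P (U n)) /\ (forall n, P (V n)) /\
    (forall k x, U k x -> ~ V k x) /\
    (forall k x, ~ V k x -> U (S k) x) /\
    (forall x, W x <-> exists n, U n x).

Definition cls (P : (X -> Prop) -> Prop) (x : X) : X -> Prop :=
  fun y => forall V, P V -> (V x <-> V y).

Definition quot (P : (X -> Prop) -> Prop) : Type :=
  { C : X -> Prop | exists x, C = cls P x }.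

Definition qmap (P : (X -> Prop) -> Prop) (x : X) : quot P :=
  exist _ (cls P x) (ex_intro _ x eq_refl).

Definition qimage (P : (X -> Prop) -> Prop) (V : X -> Prop) : quot P -> Prop :=
  fun c => exists x, V x /\ c = qmap P x.
End Defs.

Definition is_topology {Y : Type} (T : (Y -> Prop) -> Prop) : Prop :=
  T (fun _ => True) /\ T (fun _ => False) /\
  (forall U V, T U -> T V -> T (fun y => U y /\ V y)) /\
  (forall F : (Y -> Prop) -> Prop, (forall U, F U -> T U) ->
      T (fun y => exists U, F U /\ U y)).

(* Open sets of the Q_P-topology: the coarsest topology on X/P containing
   all q[V], V in P (intersection of all such topologies). *)
Definition Q_open {X : Type} (P : (X -> Prop) -> Prop) (U : quot P -> Prop) : Prop :=
  forall T : (quot P -> Prop) -> Prop, is_topology T ->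
    (forall V, P V -> T (qimage P V)) -> T U.

(* Complete regularity (with T1) of the topology with open sets O. *)
Definition completely_regular {Y : Type} (O : (Y -> Prop) -> Prop) : Prop :=
  (forall y : Y, O (fun z => z <> y)) /\
  (forall (F : Y -> Prop) (x : Y), O (fun z => ~ F z) -> ~ F x ->
     exists f : Y -> R,
       (forall A : R -> Prop, open_set A -> O (fun y => A (f y))) /\
       (forall y, 0 <= f y <= 1) /\ f x = 0 /\ (forall y, F y -> f y = 1)).

(* The sets q[V], V in P, form a base B of the Q_P-topology that is closed under
   finite intersections and unions and separates distinct classes, so the topology
   is T1 and it suffices to find, for a point x of a basic set b, a continuous
   f : X/P -> [0,1] with f x = 0 and f = 1 off b.  Writing each basic set as the
   union of the U_n with U_k ⊆ ~V_k ⊆ U_(k+1) makes countable unions of basic sets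
   normal with respect to each other, and this interpolation property is all that
   the dyadic construction of Urysohn's lemma needs, started from the two levels
   (U_m, V_m) and (U_(m+1), V_(m+1)) with x in U_m. *)
From Stdlib Require Import Reals Lra Lia Classical ClassicalEpsilon
  FunctionalExtensionality PropExtensionality ProofIrrelevance Cantor.
Open Scope R_scope.

Lemma pred_ext {Y : Type} (U V : Y -> Prop) : (forall y, U y <-> V y) -> U = V.
Proof. intros H. extensionality y. apply propositional_extensionality, H. Qed.

Section OpenSets.
Context {Y : Type} (T : (Y -> Prop) -> Prop) (T_top : is_topology T).

Lemma open_ext U V : T U -> (forall y, U y <-> V y) -> T V.
Proof. intros HU H. rewrite <- (pred_ext U V H). exact HU. Qed.

Lemma open_full U : (forall y, U y) -> T U.
Proof. intros H. apply (open_ext _ _ (proj1 T_top)). firstorder. Qed.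

Lemma open_empty U : (forall y, ~ U y) -> T U.
Proof. intros H. apply (open_ext _ _ (proj1 (proj2 T_top))). firstorder. Qed.

Lemma open_inter U V : T U -> T V -> T (fun y => U y /\ V y).
Proof. apply T_top. Qed.

Lemma open_covered U :
  (forall y, U y -> exists V, T V /\ V y /\ forall z, V z -> U z) -> T U.
Proof.
  intros H. apply (open_ext (fun y => exists V, (T V /\ forall z, V z -> U z) /\ V y)).
  - apply T_top. intros V [HV _]. exact HV.
  - intros y. split.
    + intros [V [[_ HVU] Vy]]. auto.
    + intros Uy. destruct (H y Uy) as [V [HV [Vy HVU]]]. eauto.
Qed.

Lemma open_preimage_of_rays (f : Y -> R) :
  (forall r, T (fun y => f y < r)) -> (forall r, T (fun y => r < f y)) ->
  forall A, open_set A -> T (fun y => A (f y)).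
Proof.
  intros Hlt Hgt A HA. apply open_covered. intros y Ay.
  destruct (HA _ Ay) as [d Hd]. pose proof (cond_pos d).
  exists (fun z => f z < f y + d /\ f y - d < f z). split; [apply open_inter; auto|].
  split; [lra|]. intros z [h1 h2]. apply Hd. unfold disc. apply Rabs_def1; lra.
Qed.

Lemma open_preimage_const (c : R) A : T (fun _ : Y => A c).
Proof.
  destruct (classic (A c)); [apply open_full | apply open_empty]; auto.
Qed.
End OpenSets.

Section GeneratedTopology.
Context {Y : Type} (B : (Y -> Prop) -> Prop).

Definition generated_open (U : Y -> Prop) : Prop :=
  forall T, is_topology T -> (forall b, B b -> T b) -> T U.

Definition basis_open (U : Y -> Prop) : Prop :=
  forall y, U y -> exists b, B b /\ b y /\ forall z, b z -> U z.

Lemma generated_open_topology : is_topology generated_open.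
Proof.
  split; [|split; [|split]].
  - intros T HT _. apply HT.
  - intros T HT _. apply HT.
  - intros U V HU HV T HT HB. apply (open_inter T HT); [apply HU | apply HV]; auto.
  - intros F HF T HT HB. apply HT. intros U FU. apply HF; auto.
Qed.

Lemma generated_open_basis b : B b -> generated_open b.
Proof. intros Bb T _ HB. auto. Qed.

Lemma basis_open_inter U V :
  ring_of_sets B -> basis_open U -> basis_open V -> basis_open (fun y => U y /\ V y).
Proof.
  intros HB HU HV y [Uy Vy].
  destruct (HU y Uy) as [b [Bb [by' Hb]]]. destruct (HV y Vy) as [c [Bc [cy Hc]]].
  exists (fun z => b z /\ c z). split; [apply HB; auto|]. split; [auto|].
  intros z [bz cz]. auto.
Qed.

Lemma generated_open_cases U :
  ring_of_sets B -> generated_open U -> (forall y, U y) \/ basis_open U.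
Proof.
  intros HB HU. apply (HU (fun U => (forall y, U y) \/ basis_open U)).
  - split; [|split; [|split]].
    + left. auto.
    + right. intros y [].
    + intros U1 U2 [H1|H1] [H2|H2].
      * left. auto.
      * right. intros y [_ y2]. destruct (H2 y y2) as [b [Bb [by' Hb]]]. firstorder.
      * right. intros y [y1 _]. destruct (H1 y y1) as [b [Bb [by' Hb]]]. firstorder.
      * right. apply basis_open_inter; auto.
    + intros F HF. destruct (classic (exists U, F U /\ forall y, U y)) as [[U0 [FU0 H0]]|Hn].
      * left. intros y. eauto.
      * right. intros y [U0 [FU0 U0y]]. destruct (HF U0 FU0) as [H0|H0].
        -- exfalso. eauto.
        -- destruct (H0 y U0y) as [b [Bb [by' Hb]]]. exists b. eauto 6.
  - intros b Bb. right. intros y by'. eauto.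
Qed.
End GeneratedTopology.

Section SigmaUnions.
Context {Y : Type} (B : (Y -> Prop) -> Prop).
Hypothesis B_ring : ring_of_sets B.
Hypothesis B_seq : forall V, B V -> P_seq B V.

Definition sigma_union (W : Y -> Prop) : Prop :=
  exists s : nat -> Y -> Prop, (forall n, B (s n)) /\ forall y, W y <-> exists n, s n y.

Lemma sigma_union_basis b : B b -> sigma_union b.
Proof.
  intros Bb. exists (fun _ => b). split; [auto|]. intros y. split.
  - intros by'. exists 0%nat. exact by'.
  - intros [_ by']. exact by'.
Qed.

Lemma sigma_union_open T W :
  is_topology T -> (forall b, B b -> T b) -> sigma_union W -> T W.
Proof.
  intros HT HB [s [Bs Hs]]. apply (open_covered T HT). intros y Wy.
  destruct (proj1 (Hs y) Wy) as [n sy]. exists (s n).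
  split; [auto|]. split; [auto|]. intros z sz. apply Hs. eauto.
Qed.

(* The closed set [~ K n] lies between [O n] and [W]. *)
Definition exhaustion (W : Y -> Prop) (O K : nat -> Y -> Prop) : Prop :=
  (forall n, B (O n)) /\ (forall n, B (K n)) /\
  (forall n y, O n y -> K n y -> False) /\ (forall n y, W y \/ K n y) /\
  (forall y, W y <-> exists n, O n y).

Lemma basis_exhaustion b : B b -> exists O K, exhaustion b O K.
Proof.
  intros Bb. destruct (B_seq b Bb) as [U [V [BU [BV [UV [VU Hb]]]]]].
  exists U, V. split; [auto|]. split; [auto|]. split; [auto|]. split; [|auto].
  intros n y. destruct (classic (V n y)) as [h|h]; [right; auto|left].
  apply Hb. exists (S n). auto.
Qed.

Lemma sigma_union_exhaustion W : sigma_union W -> exists O K, exhaustion W O K.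
Proof.
  intros [s [Bs Hs]].
  destruct (choice (fun a (OK : (nat -> Y -> Prop) * (nat -> Y -> Prop)) =>
              exhaustion (s a) (fst OK) (snd OK))) as [g Hg].
  { intros a. destruct (basis_exhaustion (s a) (Bs a)) as [O [K H]]. exists (O, K). exact H. }
  pose (O k := fst (g (fst (of_nat k))) (snd (of_nat k))).
  pose (K k := snd (g (fst (of_nat k))) (snd (of_nat k))).
  exists O, K. split; [|split; [|split; [|split]]].
  - intros k. apply (Hg _).
  - intros k. apply (Hg _).
  - intros k. apply (Hg _).
  - intros k y. destruct (proj1 (proj2 (proj2 (proj2 (Hg (fst (of_nat k)))))) (snd (of_nat k)) y)
      as [h|h]; [left|right; exact h].
    apply Hs. eauto.
  - intros y. split.
    + intros Wy. destruct (proj1 (Hs y) Wy) as [a sy].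
      destruct (proj1 (proj2 (proj2 (proj2 (proj2 (Hg a)))) y) sy) as [n h].
      exists (to_nat (a, n)). unfold O. rewrite cancel_of_to. exact h.
    + intros [k h]. apply Hs. exists (fst (of_nat k)). apply (Hg _). eauto.
Qed.

Fixpoint prefix_meet (K : nat -> Y -> Prop) (k : nat) : Y -> Prop :=
  match k with
  | O => K O
  | S k => fun y => prefix_meet K k y /\ K (S k) y
  end.

Lemma prefix_meet_basis K k : (forall n, B (K n)) -> B (prefix_meet K k).
Proof. intros HK. induction k; simpl; [auto|apply B_ring; auto]. Qed.

Lemma prefix_meet_le K k j y : (j <= k)%nat -> prefix_meet K k y -> K j y.
Proof.
  induction k as [|k IH]; simpl; intros Hj Hy.
  - replace j with 0%nat by lia. exact Hy.
  - destruct (Nat.eq_dec j (S k)) as [->|Hne]; [apply Hy|].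
    apply IH; [lia|apply Hy].
Qed.

Lemma prefix_meet_all K k y : (forall j, K j y) -> prefix_meet K k y.
Proof. intros H. induction k; simpl; auto. Qed.

Definition staircase (O K : nat -> Y -> Prop) (y : Y) : Prop :=
  exists k, O k y /\ prefix_meet K k y.

Lemma staircase_sigma_union O K :
  (forall n, B (O n)) -> (forall n, B (K n)) -> sigma_union (staircase O K).
Proof.
  intros HO HK. exists (fun k y => O k y /\ prefix_meet K k y). split.
  - intros k. apply B_ring; [auto|apply prefix_meet_basis; auto].
  - intros y. reflexivity.
Qed.

Lemma staircase_disjoint O K O' K' y :
  (forall n y, O n y -> K n y -> False) -> (forall n y, O' n y -> K' n y -> False) ->
  staircase O K' y -> staircase O' K y -> False.
Proof.
  intros HOK HOK' [k [Ok Kk]] [m [Om Km]]. destruct (Nat.le_ge_cases k m) as [h|h].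
  - exact (HOK k y Ok (prefix_meet_le K m k y h Km)).
  - exact (HOK' m y Om (prefix_meet_le K' k m y h Kk)).
Qed.

Lemma staircase_covers W W' O K O' K' y :
  exhaustion W O K -> exhaustion W' O' K' -> (W y \/ W' y) -> staircase O K' y \/ W' y.
Proof.
  intros [_ [_ [_ [_ HW]]]] [_ [_ [_ [HK' _]]]] Hy.
  destruct (classic (W' y)) as [h|h]; [right; exact h|left].
  destruct (proj1 (HW y) ltac:(tauto)) as [k Ok]. exists k. split; [exact Ok|].
  apply prefix_meet_all. intros j. destruct (HK' j y); tauto.
Qed.

(* Normality: the disjoint closed sets [~ W'] and [~ W] have disjoint neighbourhoods
   [G] and [H]. *)
Lemma sigma_union_normal W W' :
  sigma_union W -> sigma_union W' -> (forall y, W y \/ W' y) ->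
  exists G H, sigma_union G /\ sigma_union H /\ (forall y, G y -> H y -> False) /\
    (forall y, G y \/ W' y) /\ (forall y, H y \/ W y).
Proof.
  intros HW HW' Hcov.
  destruct (sigma_union_exhaustion W HW) as [O [K EW]].
  destruct (sigma_union_exhaustion W' HW') as [O' [K' EW']].
  pose proof EW as [BO [BK [OK _]]]. pose proof EW' as [BO' [BK' [OK' _]]].
  exists (staircase O K'), (staircase O' K).
  split; [apply staircase_sigma_union; auto|].
  split; [apply staircase_sigma_union; auto|].
  split; [intros y; apply staircase_disjoint; auto|].
  split; intros y.
  - apply (staircase_covers W W' O K O' K' y EW EW' (Hcov y)).
  - apply (staircase_covers W' W O' K' O K y EW' EW). destruct (Hcov y); tauto.
Qed.
End SigmaUnions.

Definition dyadic (n k : nat) : R := INR k / 2 ^ n.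

Lemma pow2_pos n : 0 < 2 ^ n.
Proof. apply pow_lt. lra. Qed.

Lemma INR_pow2 n : INR (2 ^ n) = 2 ^ n.
Proof. rewrite pow_INR. reflexivity. Qed.

Lemma INR_le_pow2 n : INR n <= 2 ^ n.
Proof.
  induction n as [|n IH]; [simpl; lra|].
  rewrite S_INR. simpl. pose proof (pow_R1_Rle 2 n ltac:(lra)). lra.
Qed.

Lemma dyadic_lift n m k : dyadic (n + m) (k * 2 ^ m) = dyadic n k.
Proof.
  unfold dyadic. rewrite mult_INR, INR_pow2, pow_add.
  field. split; apply Rgt_not_eq, pow2_pos.
Qed.

Lemma dyadic_scaled n k : dyadic n k * 2 ^ n = INR k.
Proof. unfold dyadic. field. apply Rgt_not_eq, pow2_pos. Qed.

Lemma dyadic_lt_succ n k : dyadic n k < dyadic n (S k).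
Proof.
  unfold dyadic, Rdiv. rewrite S_INR.
  pose proof (Rinv_0_lt_compat _ (pow2_pos n)). nra.
Qed.

Lemma dyadic_bounds n k : (k <= 2 ^ n)%nat -> 0 <= dyadic n k <= 1.
Proof.
  intros Hk. apply le_INR in Hk. rewrite INR_pow2 in Hk.
  pose proof (pow2_pos n). pose proof (pos_INR k). pose proof (dyadic_scaled n k).
  split; nra.
Qed.

Lemma dyadic_le_nat n k n' k' :
  dyadic n k <= dyadic n' k' -> (k * 2 ^ n' <= k' * 2 ^ n)%nat.
Proof.
  rewrite <- (dyadic_lift n n' k), <- (dyadic_lift n' n k'), (Nat.add_comm n' n).
  unfold dyadic. intros H. apply INR_le.
  pose proof (pow2_pos (n + n')). apply Rmult_le_reg_r with (/ 2 ^ (n + n')); [|exact H].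
  apply Rinv_0_lt_compat. lra.
Qed.

Lemma nat_floor s : 0 <= s -> exists m, INR m <= s < INR m + 1.
Proof.
  intros Hs. destruct (base_Int_part s) as [H1 H2].
  assert (Hz : (0 <= Int_part s)%Z).
  { assert (H : IZR (-1) < IZR (Int_part s)) by lra. apply lt_IZR in H. lia. }
  exists (Z.to_nat (Int_part s)). rewrite INR_IZR_INZ, Znat.Z2Nat.id by exact Hz. lra.
Qed.

(* Two consecutive dyadics of a level [n] with [2 / 2 ^ n < b - a] fit in [(a, b)]. *)
Lemma dyadic_step_between a b : 0 <= a -> a < b -> b <= 1 ->
  exists n k, (S k <= 2 ^ n)%nat /\ a < dyadic n k /\ dyadic n (S k) < b.
Proof.
  intros Ha Hab Hb.
  destruct (INR_archimed (b - a) 2 ltac:(lra)) as [n Hn].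
  pose proof (INR_le_pow2 n). pose proof (pow2_pos n).
  destruct (nat_floor (a * 2 ^ n)) as [m [Hm1 Hm2]]; [nra|].
  assert (Hk : dyadic n (S (S m)) < b).
  { apply Rmult_lt_reg_r with (2 ^ n); [lra|]. rewrite dyadic_scaled, !S_INR. nra. }
  exists n, (S m). split; [|split; [|exact Hk]].
  - apply INR_le. rewrite INR_pow2. apply Rlt_le.
    apply Rmult_lt_reg_r with (/ 2 ^ n); [apply Rinv_0_lt_compat; lra|].
    rewrite Rinv_r by lra. exact (Rlt_le_trans _ _ _ Hk Hb).
  - apply Rmult_lt_reg_r with (2 ^ n); [lra|]. rewrite dyadic_scaled, S_INR. lra.
Qed.

Section DyadicScale.
Context {Y : Type} (B : (Y -> Prop) -> Prop).
Hypothesis B_ring : ring_of_sets B.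
Hypothesis B_seq : forall V, B V -> P_seq B V.

(* A bracket [(G, H)] stands for the open set [G] and the closed set [~ H] containing it. *)
Record bracket := Bracket { inner : Y -> Prop; outer : Y -> Prop }.

Definition separated (p : bracket) : Prop :=
  sigma_union B (inner p) /\ sigma_union B (outer p) /\
  forall y, inner p y -> outer p y -> False.

Definition precedes (p q : bracket) : Prop := forall y, outer p y \/ inner q y.

Lemma interpolation p q :
  sigma_union B (outer p) -> sigma_union B (inner q) -> precedes p q ->
  exists r, separated r /\ precedes p r /\ precedes r q.
Proof.
  intros Hp Hq Hpq.
  destruct (sigma_union_normal B B_ring B_seq (inner q) (outer p) Hq Hp)
    as [G [H [HG [HH [GH [Gp Hq']]]]]].
  { intros y. destruct (Hpq y); auto. }
  exists (Bracket G H). repeat split; auto.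
  intros y. destruct (Gp y); auto.
Qed.

Definition midpoint (p q : bracket) : bracket :=
  epsilon (inhabits p) (fun r => separated r /\ precedes p r /\ precedes r q).

Lemma midpoint_spec p q :
  sigma_union B (outer p) -> sigma_union B (inner q) -> precedes p q ->
  separated (midpoint p q) /\ precedes p (midpoint p q) /\ precedes (midpoint p q) q.
Proof. intros Hp Hq Hpq. unfold midpoint. apply epsilon_spec, interpolation; auto. Qed.

Variables p0 p1 : bracket.
Hypothesis p0_separated : separated p0.
Hypothesis p1_separated : separated p1.
Hypothesis p0_p1 : precedes p0 p1.

(* [scale n k] is attached to the dyadic [k / 2 ^ n]. *)
Fixpoint scale (n k : nat) : bracket :=
  match n with
  | O => if Nat.eqb k 0 then p0 else p1
  | S n => if Nat.even k then scale n (Nat.div2 k)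
           else midpoint (scale n (Nat.div2 k)) (scale n (S (Nat.div2 k)))
  end.

Lemma scale_double n k : scale (S n) (2 * k) = scale n k.
Proof. cbn [scale]. rewrite Nat.even_even, Nat.div2_double. reflexivity. Qed.

Lemma scale_odd n k :
  scale (S n) (2 * k + 1) = midpoint (scale n k) (scale n (S k)).
Proof. cbn [scale]. rewrite Nat.even_odd, Nat.div2_odd'. reflexivity. Qed.

Lemma scale_lift n m k : scale (n + m) (k * 2 ^ m) = scale n k.
Proof.
  induction m as [|m IH].
  - rewrite Nat.add_0_r, Nat.mul_1_r. reflexivity.
  - rewrite Nat.add_succ_r, Nat.pow_succ_r', Nat.mul_comm, <- Nat.mul_assoc,
      (Nat.mul_comm _ k), scale_double. exact IH.
Qed.

Lemma scale_chain n :
  (forall k, (k <= 2 ^ n)%nat -> separated (scale n k)) /\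
  (forall k, (k < 2 ^ n)%nat -> precedes (scale n k) (scale n (S k))).
Proof.
  induction n as [|n [IHsep IHprec]].
  - simpl. split.
    + intros [|[|k]] Hk; simpl; auto; lia.
    + intros k Hk. replace k with 0%nat by lia. exact p0_p1.
  - assert (Hmid : forall j, (j < 2 ^ n)%nat ->
      let r := midpoint (scale n j) (scale n (S j)) in
      separated r /\ precedes (scale n j) r /\ precedes r (scale n (S j))).
    { intros j Hj. apply midpoint_spec; [apply IHsep|apply IHsep|apply IHprec]; lia. }
    rewrite Nat.pow_succ_r'. split.
    + intros k Hk. destruct (Nat.Even_or_Odd k) as [[j ->]|[j ->]].
      * rewrite scale_double. apply IHsep. lia.
      * rewrite scale_odd. apply Hmid. lia.
    + intros k Hk. destruct (Nat.Even_or_Odd k) as [[j ->]|[j ->]].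
      * replace (S (2 * j)) with (2 * j + 1)%nat by lia.
        rewrite scale_double, scale_odd. apply Hmid. lia.
      * replace (S (2 * j + 1)) with (2 * S j)%nat by lia.
        rewrite scale_odd, scale_double. apply Hmid. lia.
Qed.

Lemma inner_scale_mono n i j y :
  (i <= j <= 2 ^ n)%nat -> inner (scale n i) y -> inner (scale n j) y.
Proof.
  destruct (scale_chain n) as [Hsep Hprec].
  induction j as [|j IH]; intros Hij Hy.
  - replace i with 0%nat in Hy by lia. exact Hy.
  - destruct (Nat.eq_dec i (S j)) as [<-|Hne]; [exact Hy|].
    assert (Hj : inner (scale n j) y) by (apply IH; [lia|exact Hy]).
    destruct (Hprec j ltac:(lia) y) as [Ho|Hi]; [|exact Hi].
    exfalso. apply (proj2 (proj2 (Hsep j ltac:(lia))) y Hj Ho).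
Qed.

Lemma inner_scale_dyadic_mono n k n' k' y :
  (k <= 2 ^ n)%nat -> (k' <= 2 ^ n')%nat -> dyadic n k <= dyadic n' k' ->
  inner (scale n k) y -> inner (scale n' k') y.
Proof.
  intros Hk Hk' Hle Hy. apply dyadic_le_nat in Hle.
  rewrite <- (scale_lift n' n k'), Nat.add_comm.
  rewrite <- (scale_lift n n' k) in Hy.
  apply (inner_scale_mono (n + n') (k * 2 ^ n')); [|exact Hy].
  split; [exact Hle|]. rewrite Nat.pow_add_r, Nat.mul_comm.
  apply Nat.mul_le_mono_l. exact Hk'.
Qed.

Definition dyadics_outside (y : Y) (r : R) : Prop :=
  r = 0 \/ exists n k, (k <= 2 ^ n)%nat /\ r = dyadic n k /\ ~ inner (scale n k) y.

Lemma dyadics_outside_le_1 y : is_upper_bound (dyadics_outside y) 1.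
Proof. intros r [->|[n [k [Hk [-> _]]]]]; [lra|apply dyadic_bounds; exact Hk]. Qed.

Definition urysohn_fun (y : Y) : R :=
  proj1_sig (completeness (dyadics_outside y) (ex_intro _ 1 (dyadics_outside_le_1 y))
                          (ex_intro _ 0 (or_introl eq_refl))).

Lemma urysohn_fun_lub y : is_lub (dyadics_outside y) (urysohn_fun y).
Proof. unfold urysohn_fun. destruct completeness as [r Hr]. exact Hr. Qed.

Lemma urysohn_fun_bounds y : 0 <= urysohn_fun y <= 1.
Proof.
  destruct (urysohn_fun_lub y) as [Hub Hleast]. split.
  - apply Hub. left. reflexivity.
  - apply Hleast, dyadics_outside_le_1.
Qed.

Lemma urysohn_fun_ge n k y :
  (k <= 2 ^ n)%nat -> ~ inner (scale n k) y -> dyadic n k <= urysohn_fun y.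
Proof. intros Hk Hy. apply (urysohn_fun_lub y). right. exists n, k. auto. Qed.

Lemma urysohn_fun_le n k y :
  (k <= 2 ^ n)%nat -> inner (scale n k) y -> urysohn_fun y <= dyadic n k.
Proof.
  intros Hk Hy. apply (urysohn_fun_lub y).
  intros r [->|[n' [k' [Hk' [-> Hy']]]]]; [apply dyadic_bounds; exact Hk|].
  apply Rnot_lt_le. intros Hlt. apply Hy'.
  apply (inner_scale_dyadic_mono n k); auto. lra.
Qed.

Section Continuity.
Variable T : (Y -> Prop) -> Prop.
Hypothesis T_top : is_topology T.
Hypothesis T_basis : forall b, B b -> T b.

Lemma open_inner_scale n k : (k <= 2 ^ n)%nat -> T (inner (scale n k)).
Proof.
  intros Hk. apply (sigma_union_open B); auto. apply (proj1 (scale_chain n) k Hk).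
Qed.

Lemma open_outer_scale n k : (k <= 2 ^ n)%nat -> T (outer (scale n k)).
Proof.
  intros Hk. apply (sigma_union_open B); auto. apply (proj1 (scale_chain n) k Hk).
Qed.

Lemma urysohn_fun_open_lt r : T (fun y => urysohn_fun y < r).
Proof.
  destruct (Rlt_or_le 1 r) as [Hr|Hr].
  - apply open_full; [exact T_top|]. intros y. pose proof (urysohn_fun_bounds y). lra.
  - apply (open_covered T T_top). intros y Hy. pose proof (urysohn_fun_bounds y).
    destruct (dyadic_step_between (urysohn_fun y) r) as [n [k [Hk [H1 H2]]]]; try lra.
    pose proof (dyadic_lt_succ n k).
    exists (inner (scale n k)). split; [apply open_inner_scale; lia|]. split.
    + apply NNPP. intros Hn. apply urysohn_fun_ge in Hn; [lra|lia].
    + intros z Hz. apply urysohn_fun_le in Hz; [lra|lia].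
Qed.

Lemma urysohn_fun_open_gt r : T (fun y => r < urysohn_fun y).
Proof.
  destruct (Rlt_or_le r 0) as [Hr|Hr].
  - apply open_full; [exact T_top|]. intros y. pose proof (urysohn_fun_bounds y). lra.
  - apply (open_covered T T_top). intros y Hy. pose proof (urysohn_fun_bounds y).
    destruct (dyadic_step_between r (urysohn_fun y)) as [n [k [Hk [H1 H2]]]]; try lra.
    destruct (scale_chain n) as [Hsep Hprec].
    exists (outer (scale n k)). split; [apply open_outer_scale; lia|]. split.
    + destruct (Hprec k ltac:(lia) y) as [Ho|Hi]; [exact Ho|].
      apply urysohn_fun_le in Hi; [lra|lia].
    + intros z Hz. apply Rlt_le_trans with (dyadic n k); [exact H1|].
      apply urysohn_fun_ge; [lia|]. intros Hi.
      exact (proj2 (proj2 (Hsep k ltac:(lia))) z Hi Hz).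
Qed.

Lemma urysohn_fun_continuous A : open_set A -> T (fun y => A (urysohn_fun y)).
Proof.
  apply open_preimage_of_rays; [exact T_top|apply urysohn_fun_open_lt|apply urysohn_fun_open_gt].
Qed.
End Continuity.

End DyadicScale.
Section CompleteRegularity.
Context {Y : Type} (B : (Y -> Prop) -> Prop).
Hypothesis B_ring : ring_of_sets B.
Hypothesis B_seq : forall V, B V -> P_seq B V.

Lemma urysohn_basis T b x :
  is_topology T -> (forall b, B b -> T b) -> B b -> b x ->
  exists f : Y -> R, (forall A, open_set A -> T (fun y => A (f y))) /\
    (forall y, 0 <= f y <= 1) /\ f x = 0 /\ (forall y, ~ b y -> f y = 1).
Proof.
  intros HT HTB Bb bx. destruct (B_seq b Bb) as [U [V [BU [BV [UV [VU Hb]]]]]].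
  destruct (proj1 (Hb x) bx) as [m Um].
  pose (p0 := Bracket (U m) (V m)). pose (p1 := Bracket (U (S m)) (V (S m))).
  assert (Hsep : forall n, separated B (Bracket (U n) (V n))).
  { intros n. split; [apply sigma_union_basis, BU|].
    split; [apply sigma_union_basis, BV|exact (UV n)]. }
  assert (H01 : precedes p0 p1).
  { intros y. destruct (classic (V m y)); [left|right; apply VU]; auto. }
  pose proof (urysohn_fun_bounds B p0 p1) as Hbounds.
  exists (urysohn_fun B p0 p1). split; [|split; [exact Hbounds|split]].
  - exact (urysohn_fun_continuous B B_ring B_seq p0 p1 (Hsep m) (Hsep (S m)) H01 T HT HTB).
  - assert (H : urysohn_fun B p0 p1 x <= dyadic 0 0).
    { apply (urysohn_fun_le B B_ring B_seq p0 p1 (Hsep m) (Hsep (S m)) H01); [lia|exact Um]. }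
    unfold dyadic in H. simpl in H. specialize (Hbounds x). lra.
  - intros y Hy. assert (H : dyadic 0 1 <= urysohn_fun B p0 p1 y).
    { apply urysohn_fun_ge; [simpl; lia|]. intros Hu. apply Hy, Hb. exists (S m). exact Hu. }
    unfold dyadic in H. simpl in H. specialize (Hbounds y). lra.
Qed.

Definition separates_points : Prop :=
  forall y z : Y, y <> z -> exists b, B b /\ ~ (b y <-> b z).

Lemma separates_points_avoiding y z :
  separates_points -> y <> z -> exists b, B b /\ b z /\ ~ b y.
Proof.
  intros Hsep Hyz. destruct (Hsep y z Hyz) as [b [Bb Hb]].
  destruct (classic (b z)) as [bz|bz]; [exists b; tauto|].
  assert (by' : b y) by tauto.
  destruct (B_seq b Bb) as [U [V [BU [BV [UV [VU Hbu]]]]]].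
  destruct (proj1 (Hbu y) by') as [n Uy].
  exists (V n). split; [exact (BV n)|]. split.
  - apply NNPP. intros Vz. apply bz, Hbu. eauto.
  - intros Vy. exact (UV n y Uy Vy).
Qed.

Theorem generated_completely_regular :
  separates_points -> completely_regular (generated_open B).
Proof.
  intros Hsep. pose proof (generated_open_topology B) as HT.
  pose proof (generated_open_basis B) as HTB. split.
  - intros y. apply (open_covered _ HT). intros z Hz.
    destruct (separates_points_avoiding y z Hsep (fun e => Hz (eq_sym e))) as [b [Bb [bz nby]]].
    exists b. split; [auto|]. split; [exact bz|]. intros w bw ->. exact (nby bw).
  - intros F x HF Fx. destruct (generated_open_cases B _ B_ring HF) as [Hfull|Hbasis].
    + exists (fun _ => 0). split; [intros A _; apply (open_preimage_const _ HT)|].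
      split; [intros; lra|]. split; [reflexivity|]. intros y Fy. exfalso. exact (Hfull y Fy).
    + destruct (Hbasis x Fx) as [b [Bb [bx HbF]]].
      destruct (urysohn_basis _ b x HT HTB Bb bx) as [f [Hf [Hbounds [Hx H1]]]].
      exists f. split; [exact Hf|]. split; [exact Hbounds|]. split; [exact Hx|].
      intros y Fy. apply H1. intros by'. exact (HbF y by' Fy).
Qed.
End CompleteRegularity.

Section Quotient.
Context {X : Type} (P : (X -> Prop) -> Prop).

Definition qbasis (S : quot P -> Prop) : Prop := exists V, P V /\ S = qimage P V.

Lemma qmap_surj (c : quot P) : exists x, c = qmap P x.
Proof.
  destruct c as [C [x HC]]. exists x. subst C. reflexivity.
Qed.

Lemma qimage_qmap V x : P V -> (qimage P V (qmap P x) <-> V x).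
Proof.
  intros PV. split.
  - intros [x' [Vx' Hq]]. apply (f_equal (@proj1_sig _ _)) in Hq. simpl in Hq.
    assert (Hx' : cls P x' x') by (intros W _; tauto).
    rewrite <- Hq in Hx'. apply (Hx' V PV). exact Vx'.
  - intros Vx. exists x. auto.
Qed.

Lemma qbasis_ring : ring_of_sets P -> ring_of_sets qbasis.
Proof.
  intros HP S1 S2 [V1 [P1 ->]] [V2 [P2 ->]]. destruct (HP V1 V2 P1 P2) as [PI PU].
  split; [exists (fun x => V1 x /\ V2 x) | exists (fun x => V1 x \/ V2 x)];
    (split; [assumption|]); apply pred_ext; intros c; destruct (qmap_surj c) as [x ->];
    rewrite !qimage_qmap by assumption; tauto.
Qed.

Lemma qbasis_seq : (forall V, P V -> P_seq P V) -> forall S, qbasis S -> P_seq qbasis S.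
Proof.
  intros HP S [V [PV ->]]. destruct (HP V PV) as [U [W [PU [PW [UW [WU HV]]]]]].
  exists (fun n => qimage P (U n)), (fun n => qimage P (W n)).
  split; [intros n; exists (U n); auto|]. split; [intros n; exists (W n); auto|].
  split; [|split]; [intros k c|intros k c|intros c]; destruct (qmap_surj c) as [x ->];
    rewrite ?qimage_qmap by auto.
  - apply UW.
  - apply WU.
  - rewrite HV. split; intros [n Hn]; exists n; [rewrite qimage_qmap|rewrite <- qimage_qmap]; eauto.
Qed.

Lemma qbasis_separates : separates_points qbasis.
Proof.
  intros c d Hcd. destruct (qmap_surj c) as [x ->], (qmap_surj d) as [x' ->].
  apply NNPP. intros Hsame. apply Hcd.
  assert (HP : forall V, P V -> (V x <-> V x')).
  { intros V PV. apply NNPP. intros Hne. apply Hsame. exists (qimage P V).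
    split; [exists V; auto|]. rewrite !qimage_qmap by exact PV. exact Hne. }
  assert (Hcls : cls P x = cls P x').
  { apply pred_ext. intros y. unfold cls.
    split; intros Hy V PV; specialize (Hy V PV); specialize (HP V PV); tauto. }
  unfold qmap. apply eq_exist_uncurried. exists Hcls. apply proof_irrelevance.
Qed.

Lemma Q_open_generated : Q_open P = generated_open qbasis.
Proof.
  apply pred_ext. intros U. split; intros HU T HT HB; apply HU; auto.
  - intros V PV. apply HB. exists V. auto.
  - intros S [V [PV ->]]. auto.
Qed.
End Quotient.

Theorem theorem5 (X : Type) (P : (X -> Prop) -> Prop) :
  ring_of_sets P ->
  (forall V, P V -> P_seq P V) ->
  completely_regular (Q_open P).
Proof.
  intros HR HS. rewrite Q_open_generated.
  apply generated_completely_regular.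
  - apply qbasis_ring. exact HR.
  - apply qbasis_seq. exact HS.
  - apply qbasis_separates.
Qed.
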